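(* Let $n\ge 4$ and let $B$ be an $n\times n$ nilpotent matrix over $\mathbb{F}$ with $B^2\neq 0$. Then $\mathcal{P}(\mathcal{N}_B)\subsetneq \mathcal{P}(n)$, i.e. there exists a partition $\underline{\mu}$ of $n$ such that no nilpotent matrix of shape $\underline{\mu}$ commutes with $B$.
   Context: $\mathbb{F}$ is an algebraically closed field of characteristic $0$. A partition of $n$ is a nonincreasing sequence of positive integers summing to $n$; $\mathcal{P}(n)$ denotes the set of all partitions of $n$. For a nilpotent matrix $A$, its shape $\mathrm{sh}(A)$ is the partition of $n$ given by the sizes of the Jordan blocks of its Jordan canonical form. For a nilpotent $n\times n$ matrix $B$, $\mathcal{N}_B$ is the set of all nilpotent $n\times n$ matrices $A$ with $AB=BA$, and $\mathcal{P}(\mathcal{N}_B)=\{\mathrm{sh}(A): A\in\mathcal{N}_B\}$. *)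

From HB Require Import structures.
From mathcomp Require Import all_boot all_algebra.
Set Implicit Arguments. Unset Strict Implicit. Unset Printing Implicit Defensive.
Import GRing.Theory.
Local Open Scope ring_scope.

Definition is_partition (n : nat) (mu : seq nat) : bool :=
  [&& sorted geq mu, all (fun k => 0 < k)%N mu & sumn mu == n].

Definition nilpotent_mx (F : pzRingType) (n : nat) (A : 'M[F]_n) : Prop :=
  exists k : nat, A ^+ k = 0.

(* Partial sums mu_1, mu_1+mu_2, ..., i.e. the block boundaries. *)
Definition block_ends (mu : seq nat) : seq nat :=
  [seq sumn (take k mu) | k <- iota 1 (size mu)].

(* The nilpotent Jordan matrix with Jordan blocks of sizes mu_1, mu_2, ...
   (in this order along the diagonal, ones on the superdiagonal inside
   each block). *)
Definition jordan_nil_mx (F : pzRingType) (n : nat) (mu : seq nat) : 'M[F]_n :=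
  \matrix_(i < n, j < n)
    ((j == i.+1 :> nat) && (i.+1 \notin block_ends mu))%:R.

Definition has_shape (F : fieldType) (n : nat) (A : 'M[F]_n) (mu : seq nat) : Prop :=
  is_partition n mu /\
  exists2 P : 'M[F]_n, P \in unitmx & A = invmx P *m jordan_nil_mx F n mu *m P.

From HB Require Import structures.
From mathcomp Require Import all_boot all_algebra.
From mathcomp Require Import zify.
From Stdlib Require Import Classical.
Set Implicit Arguments. Unset Strict Implicit. Unset Printing Implicit Defensive.
Import GRing.Theory.
Local Open Scope ring_scope.

(* Write n = N + 1.  The proof compares two rank invariants of B.

   - If B commutes with a regular nilpotent (shape (n)), then after a change
     of basis B commutes with the shift S, hence is an upper triangular
     Toeplitz matrix with zero diagonal: B = sum_(d >= k) c_d S^d, c_k <> 0.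
     Then rank B = n - k and rank B^2 <= n - 2k, so
         rank B^2 + n <= 2 rank B.                     (regular_commutant_rank)
   - If B commutes with a nilpotent of shape (N, 1) with N >= 3, the explicit
     description of the commutant of J_N (+) J_1 gives
         2 rank B < rank B^2 + n.                       (hook_commutant_rank)

   Both facts cannot hold at once (as B^2 <> 0).  So either no nilpotent of
   shape (n) commutes with B, or none of shape (N, 1) does. *)

Section Conjugation.
Variables (F : fieldType) (n : nat) (P : 'M[F]_n).
Hypothesis P_unit : P \in unitmx.

Lemma conjmx_expn (M : 'M[F]_n) m :
  (P *m M *m invmx P) ^+ m = P *m M ^+ m *m invmx P.
Proof.
elim: m => [|m IHm]; first by rewrite !expr0 mulmx1 mulmxV.
by rewrite !exprS IHm -!mulmxE !mulmxA mulmxKV.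
Qed.

Lemma mxrank_conj (M : 'M[F]_n) : \rank (P *m M *m invmx P) = \rank M.
Proof.
by rewrite mxrankMfree ?row_free_unit ?unitmx_inv // eqmxMfull // row_full_unit.
Qed.

Lemma nilpotent_conj (M : 'M[F]_n) :
  nilpotent_mx M -> nilpotent_mx (P *m M *m invmx P).
Proof. by case=> k Mk; exists k; rewrite conjmx_expn Mk mulmx0 mul0mx. Qed.

Lemma commute_conj (J A B : 'M[F]_n) : A = invmx P *m J *m P ->
  A *m B = B *m A -> (P *m B *m invmx P) *m J = J *m (P *m B *m invmx P).
Proof.
move=> defA AB.
have PA : P *m A = J *m P by rewrite defA !mulmxA mulmxV // mul1mx.
have AP : A *m invmx P = invmx P *m J by rewrite defA mulmxK.
by rewrite -!mulmxA -AP (mulmxA B) -AB !mulmxA PA.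
Qed.

End Conjugation.

(* Index arithmetic is done on nat: entry X i j reads X at (inord i, inord j). *)
Section Entries.
Variables (F : fieldType) (N : nat).

Definition entry (X : 'M[F]_N.+1) (i j : nat) : F := X (inord i) (inord j).

Lemma entryE (X : 'M[F]_N.+1) (i j : 'I_N.+1) : X i j = entry X i j.
Proof. by rewrite /entry !inord_val. Qed.

Lemma entry_sqr (X : 'M[F]_N.+1) a b :
  entry (X ^+ 2) a b = \sum_(l < N.+1) entry X a l * entry X l b.
Proof. by rewrite /entry expr2 -mulmxE mxE; apply: eq_bigr => l _; rewrite inord_val. Qed.

Lemma sum_nat_delta (G : 'I_N.+1 -> F) k :
  \sum_(l < N.+1) ((l : nat) == k)%:R * G l =
    if (k < N.+1)%N then G (inord k) else 0.
Proof.
case: ifP => hk.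
  rewrite (bigD1 (inord k)) //= inordK // eqxx mul1r big1 ?addr0 // => l hl.
  by case: eqP => [hlk|]; [move: hl; rewrite -hlk inord_val eqxx | rewrite mul0r].
rewrite big1 // => l _; case: eqP => [hlk|]; last by rewrite mul0r.
by move: hk; rewrite -hlk ltn_ord.
Qed.

End Entries.

Section Superdiagonal.
Variables (F : fieldType) (N : nat).

Definition supdiag_mx (c : pred nat) : 'M[F]_N.+1 :=
  \matrix_(i, j) (((j : nat) == i.+1) && c i.+1)%:R.

Lemma mulmx_supdiag c (M : 'M[F]_N.+1) i (j : 'I_N.+1) :
  (M *m supdiag_mx c) i j = if (0 < j)%N && c j then M i (inord j.-1) else 0.
Proof.
have shift l : (((j : nat) == l.+1) && c l.+1) = ((l == j.-1) && ((0 < j)%N && c j)).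
  by case: (nat_of_ord j) => [|j'] /=; [rewrite andbF | rewrite eqSS eq_sym; case: eqP => [->|]].
rewrite mxE (eq_bigr (fun l : 'I_N.+1 =>
  ((l : nat) == j.-1)%:R * M i l * ((0 < j)%N && c j)%:R)); last first.
  by move=> l _; rewrite mxE shift -mulnb natrM mulrCA mulrA.
rewrite -big_distrl /= sum_nat_delta.
have -> : (j.-1 < N.+1)%N by have := ltn_ord j; lia.
by case: (_ && _); rewrite ?mulr1 ?mulr0.
Qed.

Lemma supdiag_mulmx c (M : 'M[F]_N.+1) (i : 'I_N.+1) j :
  (supdiag_mx c *m M) i j = if (i < N)%N && c i.+1 then M (inord i.+1) j else 0.
Proof.
rewrite mxE (eq_bigr (fun l : 'I_N.+1 => ((l : nat) == i.+1)%:R * M l j * (c i.+1)%:R)).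
  by rewrite -big_distrl /= sum_nat_delta ltnS; case: (c _); rewrite ?andbT ?andbF ?mulr1 ?mulr0.
by move=> l _; rewrite mxE -mulnb natrM mulrAC.
Qed.

Lemma supdiag_commute c (X : 'M[F]_N.+1) :
  X *m supdiag_mx c = supdiag_mx c *m X -> forall i j, (i <= N)%N -> (j <= N)%N ->
  (if (0 < j)%N && c j then entry X i j.-1 else 0) =
  (if (i < N)%N && c i.+1 then entry X i.+1 j else 0).
Proof.
move=> XS i j hi hj; have := congr1 (fun M : 'M[F]_N.+1 => M (inord i) (inord j)) XS.
by rewrite /= mulmx_supdiag supdiag_mulmx !inordK.
Qed.

Lemma jordan_regularE : jordan_nil_mx F N.+1 [:: N.+1] = supdiag_mx predT.
Proof.
apply/matrixP => i j; rewrite !mxE /block_ends /= addn0 inE andbT.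
by case: eqP => //= hj; have := ltn_ord j; rewrite hj eqSS ltnS => /ltn_eqF ->.
Qed.

Lemma jordan_hookE : jordan_nil_mx F N.+1 [:: N; 1] = supdiag_mx (predC1 N).
Proof.
apply/matrixP => i j; rewrite !mxE /block_ends /= !addn0 addn1 !inE.
by case: eqP => //= hj; have := ltn_ord j; rewrite hj => /ltn_eqF ->; rewrite orbF.
Qed.

End Superdiagonal.

Section UpperToeplitz.
Variables (F : fieldType) (L : nat) (g : nat -> nat -> F).

Definition toeplitz_on : Prop := forall i j, (i <= L)%N -> (j <= L)%N ->
  g i j = if (i <= j)%N then g 0 (j - i) else 0.

Lemma toeplitz_onP :
  (forall i j, (i < L)%N -> (j < L)%N -> g i.+1 j.+1 = g i j) ->
  (forall i, (i < L)%N -> g i.+1 0 = 0) -> toeplitz_on.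
Proof.
move=> gS g0; elim=> [|i IHi] j hi hj; first by rewrite subn0.
case: j hj => [|j] hj; first by rewrite g0.
by rewrite gS // IHi ?subSS // ltnW.
Qed.

Lemma toeplitz_band k : toeplitz_on -> (forall d, (d < k)%N -> g 0 d = 0) ->
  forall i j, (i <= L)%N -> (j <= L)%N -> (j < i + k)%N -> g i j = 0.
Proof. by move=> gT gk i j hi hj hjk; rewrite gT //; case: ifP => // hij; apply: gk; lia. Qed.

End UpperToeplitz.

Section RankBounds.
Variable F : fieldType.

Lemma rank_stair K (M : 'M[F]_K.+1) (p d : nat) : (p + d <= K.+1)%N ->
  (forall a : nat, (a < p)%N -> entry M a (a + d) != 0) ->
  (forall a b : nat, (a < p)%N -> (b < a + d)%N -> entry M a b = 0) ->
  (p <= \rank M)%N.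
Proof.
move=> hpd hdiag hzero.
pose T := mxsub (fun a : 'I_p => inord a) (fun b : 'I_p => inord (b + d)) M.
have rT : (\rank T <= \rank M)%N.
  rewrite /T mxsubrc rowsubE; apply: leq_trans (mxrankM_maxr _ _) _.
  by rewrite -[M in colsub _ M]mulmx1 -mulmx_colsub mxrankM_maxl.
suff uT : T \in unitmx by rewrite -(mxrank_unit uT).
rewrite -unitmx_tr unitmxE det_trig; last first.
  by apply/is_trig_mxP => i j ij; rewrite !mxE; apply: hzero => //; lia.
by rewrite unitfE; apply/prodf_neq0 => i _; rewrite !mxE; apply: hdiag.
Qed.

Lemma rank_cols_window m K (M : 'M[F]_(m, K.+1)) (s q : nat) :
  (forall i (j : 'I_K.+1), ~~ ((s <= j) && (j < s + q))%N -> M i j = 0) ->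
  (\rank M <= q)%N.
Proof.
move=> hM.
pose E : 'M[F]_(q, K.+1) := \matrix_(b, j) ((j : nat) == b + s)%N%:R.
suff -> : M = colsub (fun b : 'I_q => inord (b + s)) M *m E.
  exact: leq_trans (mxrankM_maxl _ _) (rank_leq_col _).
apply/matrixP => i j; rewrite !mxE.
case: (boolP ((s <= j) && (j < s + q))%N) => hj.
  have hb : (j - s < q)%N by lia.
  rewrite (bigD1 (Ordinal hb)) //= !mxE /= subnK ?eqxx ?mulr1; last by case/andP: hj.
  rewrite inord_val big1 ?addr0 // => b hb'; rewrite !mxE.
  case: eqP => [hjb|]; last by rewrite mulr0.
  by move: hb'; rewrite -val_eqE /= hjb addnK eqxx.
rewrite hM // big1 // => b _; rewrite !mxE; case: eqP => [hjb|]; last by rewrite mulr0.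
by move: hj; rewrite hjb; have := ltn_ord b; lia.
Qed.

Lemma nilpotent_eigen0 n (M : 'M[F]_n) (v : 'rV[F]_n) c :
  nilpotent_mx M -> v *m M = c *: v -> v != 0 -> c = 0.
Proof.
move=> [k Mk] vM v0.
have vMm m : v *m M ^+ m = c ^+ m *: v.
  elim: m => [|m IHm]; first by rewrite expr0 mulmx1 scale1r.
  by rewrite exprSr -mulmxE mulmxA IHm -scalemxAl vM scalerA -exprSr.
move: (vMm k); rewrite Mk mulmx0 => /esym/eqP.
by rewrite scaler_eq0 (negbTE v0) orbF expf_eq0 => /andP[_ /eqP].
Qed.

Lemma delta_row_neq0 n (r : 'I_n) : delta_mx 0 r != 0 :> 'rV[F]_n.
Proof. by rewrite -mxrank_eq0 mxrank_delta. Qed.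

End RankBounds.

Section RegularCommutant.
Variables (F : fieldType) (N : nat) (X : 'M[F]_N.+1).
Hypothesis XS : X *m supdiag_mx F N predT = supdiag_mx F N predT *m X.
Hypothesis X_nil : nilpotent_mx X.

Lemma regular_commutant_toeplitz : toeplitz_on N (entry X).
Proof.
have XSe := supdiag_commute XS.
apply: toeplitz_onP => [i j hi hj | i hi].
  by have := XSe i j.+1 (ltnW hi) hj; rewrite /= hi.
by have := XSe i 0 (ltnW hi) isT; rewrite /= hi /= => <-.
Qed.

(* The last row of X is a multiple of e_N, with the (zero) eigenvalue X_00. *)
Lemma regular_commutant_diag0 : entry X 0 0 = 0.
Proof.
apply: (nilpotent_eigen0 (v := delta_mx 0 ord_max) X_nil); last exact: delta_row_neq0.
rewrite -rowE; apply/rowP => j; rewrite !mxE entryE regular_commutant_toeplitz ?leq_ord //.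
rewrite eqxx -val_eqE /=; have := leq_ord j; rewrite leq_eqVlt => /orP[/eqP jN | jN].
  by rewrite jN leqnn subnn eqxx mulr1.
by rewrite leqNgt jN (ltn_eqF jN) mulr0.
Qed.

(* With k the first nonzero superdiagonal: rank X = n - k, rank X^2 <= n - 2k. *)
Lemma regular_commutant_rank :
  X ^+ 2 != 0 -> (\rank (X ^+ 2) + N.+1 <= 2 * \rank X)%N.
Proof.
move=> X2; have XT := regular_commutant_toeplitz.
have exk : exists k, (k <= N)%N && (entry X 0 k != 0).
  case: (pickP (fun d : 'I_N.+1 => entry X 0 d != 0)) => [d hd | X0].
    by exists d; rewrite leq_ord.
  case/eqP: X2; suff -> : X = 0 by rewrite expr2 mul0r.
  apply/matrixP => i j; rewrite entryE XT ?leq_ord // mxE; case: ifP => // _.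
  have := X0 (inord (j - i)); rewrite inordK => [/negbFE/eqP // |].
  by have := ltn_ord j; lia.
case: (ex_minnP exk) => k /andP[kN Xk] kmin.
have below_k d : (d < k)%N -> entry X 0 d = 0.
  move=> dk; have dN : (d <= N)%N by lia.
  by apply/eqP; apply: contraTT dk => Xd; rewrite -leqNgt kmin // dN.
have k_gt0 : (0 < k)%N.
  by rewrite lt0n; apply: contraNneq Xk => ->; rewrite regular_commutant_diag0.
have band := toeplitz_band XT below_k.
have rank_ge : (N.+1 - k <= \rank X)%N.
  apply: (rank_stair (p := N.+1 - k) (d := k)) => [|a ha|a b ha hb]; first by lia.
    by rewrite XT ?leq_addr ?addKn //; lia.
  by apply: band => //; lia.
have rank_sqr_le : (\rank (X ^+ 2) <= N.+1 - 2 * k)%N.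
  apply: (rank_cols_window (s := 2 * k)) => i j hj.
  rewrite entryE entry_sqr big1 // => l _.
  case: (ltnP l (i + k)) => hl; first by rewrite (band i l) ?mul0r ?leq_ord.
  rewrite (band l j) ?mulr0 ?leq_ord //.
  by move: hj; have := ltn_ord j; lia.
have : (0 < \rank (X ^+ 2))%N by rewrite lt0n mxrank_eq0.
by lia.
Qed.

End RegularCommutant.

(* Writing
   X = [[T, a], [b, g]] with T of size N, commuting with J forces T to be
   upper triangular Toeplitz, a to vanish below row 0 and b to vanish
   outside column N - 1; nilpotency then kills the diagonal and g. *)
Section HookCommutant.
Variables (F : fieldType) (N : nat) (X : 'M[F]_N.+1).
Hypothesis N_ge3 : (3 <= N)%N.
Hypothesis XJ : X *m supdiag_mx F N (predC1 N) = supdiag_mx F N (predC1 N) *m X.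
Hypothesis X_nil : nilpotent_mx X.

Lemma hook_toeplitz : toeplitz_on N.-1 (entry X).
Proof.
apply: toeplitz_onP => [i j hi hj | i hi].
  have := supdiag_commute XJ (i := i) (j := j.+1) ltac:(lia) ltac:(lia).
  by rewrite /= ifT ?ifT //; lia.
have := supdiag_commute XJ (i := i) (j := 0) ltac:(lia) isT.
by rewrite /= ifT => [<-|]; last lia.
Qed.

Lemma hook_col_last i : (0 < i < N)%N -> entry X i N = 0.
Proof.
move=> hi; have := supdiag_commute XJ (i := i.-1) (j := N) ltac:(lia) (leqnn N).
rewrite /= eqxx andbF prednK; last lia.
by rewrite ifT => [<-|]; last lia.
Qed.

Lemma hook_rows_last r j : (N.-1 <= r <= N)%N -> (j.+1 < N)%N -> entry X r j = 0.
Proof.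
move=> hr hj; have := supdiag_commute XJ (i := r) (j := j.+1) ltac:(lia) ltac:(lia).
rewrite /= ifT; last lia.
by rewrite ifF; last lia.
Qed.

Lemma hook_row_penult :
  row (inord N.-1) X = entry X 0 0 *: delta_mx 0 (inord N.-1).
Proof.
apply/rowP => j; rewrite !mxE entryE eqxx /= -val_eqE /= inordK; last lia.
case: (ltngtP j N.-1) => hj.
- by rewrite hook_rows_last ?mulr0 //; lia.
- have -> : (j : nat) = N by have := ltn_ord j; lia.
  by rewrite hook_col_last ?mulr0 //; lia.
- by rewrite hj mulr1 hook_toeplitz ?leqnn // subnn.
Qed.

Lemma hook_diag0 : entry X 0 0 = 0.
Proof.
apply: (nilpotent_eigen0 (v := delta_mx 0 (inord N.-1)) X_nil); last exact: delta_row_neq0.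
by rewrite -rowE hook_row_penult.
Qed.

Lemma hook_row_lastE : row ord_max X =
  entry X N N.-1 *: delta_mx 0 (inord N.-1) + entry X N N *: delta_mx 0 ord_max.
Proof.
apply/rowP => j; rewrite !mxE entryE !eqxx /= -!val_eqE /= inordK; last lia.
case: (ltngtP j N.-1) => hj.
- have jN : (j < N)%N by lia.
  by rewrite hook_rows_last ?(ltn_eqF jN) ?mulr0 ?addr0 //; lia.
- have -> : (j : nat) = N by have := ltn_ord j; lia.
  by rewrite eqxx mulr0 add0r mulr1.
- by rewrite hj (_ : N.-1 == N = false) ?mulr1 ?mulr0 ?addr0 //; lia.
Qed.

(* Row N of X is an eigenvector for the eigenvalue X_NN, as row N - 1 is 0. *)
Lemma hook_corner0 : entry X N N = 0.
Proof.
have vX : row ord_max X *m X = entry X N N *: row ord_max X.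
  rewrite {1}hook_row_lastE mulmxDl -!scalemxAl -!rowE hook_row_penult hook_diag0.
  by rewrite scale0r scaler0 add0r.
have [v0 | vn0] := eqVneq (row ord_max X) 0; last exact: nilpotent_eigen0 X_nil vX vn0.
by move/rowP: v0 => /(_ ord_max); rewrite !mxE entryE.
Qed.

Lemma hook_row_last j : (j <= N)%N -> j != N.-1 -> entry X N j = 0.
Proof.
move=> jN jN1; case: (ltnP j N.-1) => hj; first by apply: hook_rows_last; lia.
have -> : j = N by lia.
exact: hook_corner0.
Qed.

Section Band.
Variable t : nat.
Hypothesis below_t : forall d, (d < t)%N -> entry X 0 d = 0.

Let band := toeplitz_band hook_toeplitz below_t.

Lemma hook_sqr_term a b l : (2 * t + 2 <= N)%N -> (a + 2 * t <= N.-1)%N ->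
  (b <= a + 2 * t)%N -> (l <= N)%N -> (l != a + t) || (b < a + 2 * t)%N ->
  entry X a l * entry X l b = 0.
Proof.
move=> tN abN ba lN hl.
case: (ltnP l N) => [lN1 | lN'].
  case: (ltnP l (a + t)) => hla; first by rewrite band ?mul0r //; lia.
  by rewrite (band (i := l) (j := b)) ?mulr0 //; lia.
have -> : l = N by lia.
case: (posnP a) => [a0 | a_gt0]; first by rewrite hook_row_last ?mulr0 //; lia.
by rewrite hook_col_last ?mul0r //; lia.
Qed.

(* Row 0 contributes rank 1; rows 1..N live in the columns t+1..N-1. *)
Lemma hook_rank_le : (0 < t)%N -> (t + 2 <= N)%N -> (\rank X <= N - t)%N.
Proof.
move=> t_gt0 tN.
pose X0 : 'M[F]_N.+1 := \matrix_(i, j) (if (i : nat) == 0 then X i j else 0).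
pose X1 : 'M[F]_N.+1 := \matrix_(i, j) (if (i : nat) == 0 then 0 else X i j).
have -> : X = X0 + X1.
  by apply/matrixP => i j; rewrite !mxE; case: ifP; rewrite ?addr0 ?add0r.
apply: leq_trans (mxrank_add _ _) _.
have rank_X0 : (\rank X0 <= 1)%N.
  rewrite -mxrank_tr; apply: (rank_cols_window (s := 0)) => i j hj.
  by rewrite !mxE ifF //; lia.
have rank_X1 : (\rank X1 <= N.-1 - t)%N.
  apply: (rank_cols_window (s := t.+1)) => i j hj; rewrite !mxE.
  case: ifP => // /negbT i0; rewrite entryE.
  have [iN | iN] := ltnP i N; last first.
    have -> : (i : nat) = N by have := ltn_ord i; lia.
    by rewrite hook_row_last ?leq_ord //; lia.
  have [jN | jN] := ltnP j N; first by apply: band; lia.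
  have -> : (j : nat) = N by have := ltn_ord j; lia.
  by rewrite hook_col_last //; lia.
lia.
Qed.

(* If the t-th superdiagonal is nonzero, X^2 has a staircase at distance 2t. *)
Lemma hook_rank_sqr_ge : (2 * t + 2 <= N)%N -> entry X 0 t != 0 ->
  (N - 2 * t <= \rank (X ^+ 2))%N.
Proof.
move=> tN Xt.
apply: (rank_stair (p := N - 2 * t) (d := 2 * t)) => [|a ha|a b ha hb]; first by lia.
  have alt : (a + t < N.+1)%N by lia.
  have Xat : entry X a (a + t) = entry X 0 t.
    by rewrite hook_toeplitz ?leq_addr ?addKn //; lia.
  have Xatt : entry X (a + t) (a + 2 * t) = entry X 0 t.
    rewrite hook_toeplitz; [|lia|lia].
    by rewrite ifT; [congr (entry X 0 _) | ]; lia.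
  rewrite entry_sqr (bigD1 (Ordinal alt)) //= big1 ?addr0 => [|l].
    by rewrite Xat Xatt mulf_neq0.
  rewrite -val_eqE /= => hl; apply: hook_sqr_term; rewrite ?hl ?leq_ord //; lia.
rewrite entry_sqr big1 // => l _.
by apply: hook_sqr_term; rewrite ?hb ?orbT ?leq_ord //; lia.
Qed.

End Band.

(* Take t the first nonzero superdiagonal of the Toeplitz block, capped at
   N - 2; either the staircase bound applies, or t is large enough that
   rank X <= N - t alone suffices. *)
Lemma hook_commutant_rank :
  X ^+ 2 != 0 -> (2 * \rank X < \rank (X ^+ 2) + N.+1)%N.
Proof.
move=> X2.
have rank_X2 : (0 < \rank (X ^+ 2))%N by rewrite lt0n mxrank_eq0.
have ext : exists d, (0 < d)%N && ((entry X 0 d != 0) || (d == N - 2)%N).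
  by exists (N - 2)%N; rewrite eqxx orbT andbT; lia.
case: (ex_minnP ext) => t /andP[t_gt0 ht] tmin.
have tN : (t <= N - 2)%N by apply: tmin; rewrite eqxx orbT andbT; lia.
have below_t d : (d < t)%N -> entry X 0 d = 0.
  move=> dt; have [-> | d_gt0] := posnP d; first exact: hook_diag0.
  by apply/eqP; apply: contraTT dt => Xd; rewrite -leqNgt tmin // d_gt0 Xd.
have := hook_rank_le below_t t_gt0 ltac:(lia).
have [/andP[Xt tN'] | small] := boolP ((entry X 0 t != 0) && (2 * t + 2 <= N)%N).
  by have := hook_rank_sqr_ge below_t tN' Xt; lia.
suff : (N <= 2 * t + 1)%N by lia.
move: small; rewrite negb_and negbK => /orP[/eqP Xt0 | ]; last by lia.
by move: ht; rewrite Xt0 eqxx /= => /eqP; lia.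
Qed.

End HookCommutant.

Theorem lemma2p2 (F : closedFieldType) (hF : has_pchar0 F) (n : nat)
  (hn : (4 <= n)%N) (B : 'M[F]_n) (hB : nilpotent_mx B) (hB2 : B ^+ 2 != 0) :
  exists mu : seq nat, is_partition n mu /\
    forall A : 'M[F]_n, nilpotent_mx A -> A *m B = B *m A -> ~ has_shape A mu.
Proof.
case: n hn B hB hB2 => [//|N] N_ge3 B B_nil B2.
have conj_sqr (P : 'M[F]_N.+1) : P \in unitmx -> (P *m B *m invmx P) ^+ 2 != 0.
  by move=> Pu; rewrite -mxrank_eq0 conjmx_expn // mxrank_conj // mxrank_eq0.
have [[A0 [_ A0B [_ [P Pu defA0]]]] | no_regular] :=
  classic (exists A, [/\ nilpotent_mx A, A *m B = B *m A & has_shape A [:: N.+1]]).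
- exists [:: N; 1]; split; first by rewrite /is_partition /= addn0 addn1 eqxx !andbT; lia.
  move=> A _ AB [_ [Q Qu defA]].
  have := commute_conj Pu defA0 A0B; rewrite jordan_regularE => XS.
  have := commute_conj Qu defA AB; rewrite jordan_hookE => XJ.
  have := regular_commutant_rank XS (nilpotent_conj Pu B_nil) (conj_sqr P Pu).
  have := hook_commutant_rank N_ge3 XJ (nilpotent_conj Qu B_nil) (conj_sqr Q Qu).
  by rewrite !conjmx_expn // !mxrank_conj //; lia.
- exists [:: N.+1]; split; first by rewrite /is_partition /= addn0 eqxx.
  by move=> A A_nil AB A_shape; apply: no_regular; exists A.
Qed.
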